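(* For every $n\ge 1$, every doubly stochastic $n\times n$ matrix $\mathcal M$ and every $\kappa\le\frac{n}{2n-1}$, there exists a directed $(2n-1)$-regular multigraph $G$ on $[n]$ whose throughput with respect to $\mathcal M$ is at least $\kappa$.
   Context: Let $n\ge 1$ and $[n]=\{1,\dots,n\}$. Networks are finite directed multigraphs on vertex set $[n]$; self-loops and parallel arcs are allowed. A directed multigraph is directed $r$-regular if every vertex has exactly $r$ outgoing and exactly $r$ incoming arcs (a self-loop at $v$ counts as one outgoing and one incoming arc of $v$). A path is a non-empty sequence of arcs $((u_1,v_1),\dots,(u_\ell,v_\ell))$ with $v_i=u_{i+1}$ for $i<\ell$; it goes from $u_1$ to $v_\ell$ and has length $\ell\ge 1$. An $n\times n$ matrix is doubly stochastic if all entries are nonnegative and every row and every column sums to $1$. In a directed $(2n-1)$-regular multigraph $G$ on $[n]$ every arc has capacity $\frac{1}{2n-1}$. $G$ hosts a nonnegative $n\times n$ matrix $\mathcal M=(a_{i,j})$ if there is a finite collection $\{(P_k,d_k)\}$, where each $P_k$ is a path in $G$ from some $s_k$ to some $t_k$ and $d_k\ge 0$, such that $\sum_{k:\,s_k=u,\,t_k=v} d_k=a_{u,v}$ for all $u,v\in[n]$, and for every arc $e$ of $G$ (parallel arcs are distinct) $\sum_{k:\,e\in P_k} d_k\le \frac{1}{2n-1}$. The throughput of $G$ with respect to a doubly stochastic $\mathcal M$ is the largest $\theta$ such that $G$ hosts $\theta\mathcal M$. *)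

From HB Require Import structures.
From mathcomp Require Import all_boot all_order all_algebra.
From mathcomp Require Import reals.
Set Implicit Arguments. Unset Strict Implicit. Unset Printing Implicit Defensive.
Import Order.TTheory GRing.Theory Num.Theory.
Local Open Scope ring_scope.

(* A finite directed multigraph on vertex set 'I_n ( = [n] shifted by one).
   Arcs are indexed by 'I_(narcs G) (so parallel arcs are distinct objects);
   arc G e = (tail, head). *)
Record mgraph (n : nat) := MGraph {
  narcs : nat;
  arc : 'I_narcs -> 'I_n * 'I_n }.

Arguments narcs {n} m : rename.
Arguments arc {n} m _ : rename.

Definition arc_t n (G : mgraph n) := 'I_(narcs G).

(* directed r-regular: every vertex has exactly r outgoing and r incoming arcs
   (a self-loop counts once in each). *)
Definition dregular n (G : mgraph n) (r : nat) : Prop :=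
  forall v : 'I_n,
    #|[set e : arc_t G | (arc G e).1 == v]| = r /\
    #|[set e : arc_t G | (arc G e).2 == v]| = r.

Definition is_path n (G : mgraph n) (p : seq (arc_t G)) : Prop :=
  p <> [::] /\
  sorted (fun e f : arc_t G => (arc G e).2 == (arc G f).1) p.

Definition path_src n (G : mgraph n) (p : seq (arc_t G)) : option 'I_n :=
  omap (fun e => (arc G e).1) (ohead p).
Definition path_dst n (G : mgraph n) (p : seq (arc_t G)) : option 'I_n :=
  omap (fun e => (arc G e).2) (ohead (rev p)).

Definition doubly_stochastic (R : realType) n (M : 'M[R]_n) : Prop :=
  (forall i j, 0 <= M i j) /\
  (forall i, \sum_j M i j = 1) /\
  (forall j, \sum_i M i j = 1).

Definition hosts_cap (R : realType) n (G : mgraph n) (c : R) (A : 'M[R]_n) : Prop :=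
  exists (fl : seq (seq (arc_t G) * R)),
    (forall k, k \in fl -> is_path k.1 /\ 0 <= k.2) /\
    (forall u v : 'I_n,
        \sum_(k <- fl | (path_src k.1 == Some u) && (path_dst k.1 == Some v)) k.2
        = A u v) /\
    (forall e : arc_t G, \sum_(k <- fl | e \in k.1) k.2 <= c).

(* In a (2n-1)-regular multigraph every arc has capacity 1/(2n-1). *)
Definition hosts (R : realType) n (G : mgraph n) (A : 'M[R]_n) : Prop :=
  hosts_cap G ((2 * n - 1)%N%:R)^-1 A.

Definition is_throughput (R : realType) n (G : mgraph n) (M : 'M[R]_n) (theta : R) : Prop :=
  hosts G (theta *: M) /\ (forall t : R, hosts G (t *: M) -> t <= theta).

(* Two-phase routing.  Take the multigraph on [n] with a loop at every vertex and
   two parallel arcs between any two distinct vertices; it is (2n-1)-regular.  For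
   every triple (u, v, w) send M u v / (2n-1) from u to v through w, using the first
   copy of u -> w and the second copy of w -> v.  Every pair (u, v) then receives
   n M u v / (2n-1), while a first (second) copy a -> x only carries the paths with
   u = a and w = x (w = a and v = x), so its load is at most a row (column) sum of M
   divided by 2n-1, i.e. its capacity.
   The throughput is attained: cutting the loops out of paths does not increase
   loads, so the hostable rates are the values of a continuous function on a compact
   set of weight vectors indexed by the finitely many simple paths. *)

From mathcomp Require Import all_boot all_order all_algebra.
From mathcomp Require Import reals classical_sets boolp topology normedtype derive.
Set Implicit Arguments. Unset Strict Implicit. Unset Printing Implicit Defensive.
Import Order.TTheory GRing.Theory Num.Theory.
Import numFieldTopology.Exports numFieldNormedType.Exports.
Local Open Scope ring_scope.

Lemma ler_sum_subpred (R : numDomainType) (I : eqType) (r : seq I) (P Q : pred I)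
    (F : I -> R) :
  (forall i, i \in r -> 0 <= F i) -> (forall i, i \in r -> P i -> Q i) ->
  \sum_(i <- r | P i) F i <= \sum_(i <- r | Q i) F i.
Proof.
move=> F0 PQ; rewrite big_mkcond [leRHS]big_mkcond big_seq [leRHS]big_seq.
apply: ler_sum => i ri; case: ifP => [/(PQ i ri) -> //|_].
by case: ifP => // _; exact: F0.
Qed.

Lemma sum_uniq_pred1 (R : nmodType) (I : eqType) (r : seq I) (x : I) (F : I -> R) :
  uniq r -> x \in r -> \sum_(i <- r | i == x) F i = F x.
Proof.
move=> ur xr; rewrite (big_rem x) //= eqxx big_seq_cond big_pred0 ?addr0 // => i.
by rewrite mem_rem_uniq // !inE andbC andbA andbN.
Qed.

Section PairSums.
Variables (R : nmodType) (I J : finType).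

Lemma sum_pair_pin1 (i0 : I) (Q : pred J) (F : I -> J -> R) :
  \sum_(p : I * J | (p.1 == i0) && Q p.2) F p.1 p.2 = \sum_(j | Q j) F i0 j.
Proof.
by rewrite -(pair_big_dep (pred1 i0) (fun _ => Q) F) big_pred1_eq.
Qed.

Lemma sum_pair_pin2 (P : pred I) (j0 : J) (F : I -> J -> R) :
  \sum_(p : I * J | P p.1 && (p.2 == j0)) F p.1 p.2 = \sum_(i | P i) F i j0.
Proof.
rewrite -(pair_big_dep P (fun _ j => j == j0) F).
by apply: eq_bigr => i _; rewrite big_pred1_eq.
Qed.

End PairSums.

Section Topology.
Variables (R : realType) (T : topologicalType).
Local Open Scope classical_set_scope.

Lemma closed_forall (I : Type) (P : I -> set T) :
  (forall i, closed (P i)) -> closed [set x | forall i, P i x].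
Proof.
move=> Pcl; suff -> : [set x | forall i, P i x] = \bigcap_i P i by exact: closed_bigI.
by apply/seteqP; split=> x /= Px i //; exact: Px.
Qed.

Lemma closed_eq_fun (f g : T -> R) :
  continuous f -> continuous g -> closed [set x | f x = g x].
Proof.
move=> fc gc; have -> : [set x | f x = g x] = (f \- g) @^-1` [set 0].
  apply/seteqP; split=> x /=; first by move=> ->; rewrite subrr.
  by move/eqP; rewrite subr_eq0 => /eqP.
apply: preimage_closed; last exact: closed_eq.
by move=> x _; exact: continuousB (fc x) (gc x).
Qed.

Lemma closed_le_fun (f : T -> R) (b : R) :
  continuous f -> closed [set x | f x <= b].
Proof.
move=> fc; apply: (@preimage_closed _ _ f [set y | y <= b]); last exact: closed_le.
by move=> x _; exact: fc.
Qed.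

Lemma continuous_sum_coord m (P : pred 'I_m) :
  continuous (fun v : 'rV[R]_m => \sum_(i | P i) v ord0 i).
Proof.
by apply: continuous_big => [|i _]; [exact: add_continuous | exact: coord_continuous].
Qed.

End Topology.

Section Flows.
Variables (R : realType) (n : nat) (G : mgraph n).
Implicit Types (p : seq (arc_t G)) (fl : seq (seq (arc_t G) * R)).

Definition arc_chain : rel (arc_t G) := fun e f => (arc G e).2 == (arc G f).1.

Definition is_flow fl := forall k, k \in fl -> is_path k.1 /\ 0 <= k.2.

Definition flow_demand fl (u v : 'I_n) : R :=
  \sum_(k <- fl | (path_src k.1 == Some u) && (path_dst k.1 == Some v)) k.2.

Definition flow_load fl (e : arc_t G) : R := \sum_(k <- fl | e \in k.1) k.2.

Lemma hosts_capP c (A : 'M[R]_n) :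
  hosts_cap G c A <->
  exists fl, [/\ is_flow fl, forall u v, flow_demand fl u v = A u v
                           & forall e, flow_load fl e <= c].
Proof. by split=> [[fl [? [? ?]]]|[fl [? ? ?]]]; exists fl. Qed.

Lemma path_src_cons e p : path_src (e :: p) = Some (arc G e).1.
Proof. by []. Qed.

Lemma path_dst_cons e p : path_dst (e :: p) = Some (arc G (last e p)).2.
Proof. by rewrite /path_dst lastI rev_rcons. Qed.

Lemma is_path_src_dst p : is_path p ->
  exists u v, path_src p = Some u /\ path_dst p = Some v.
Proof. by case: p => [[]//|e p _]; rewrite path_dst_cons; do 2 eexists. Qed.

Lemma flow_weight_le_load fl k e : is_flow fl -> k \in fl -> e \in k.1 ->
  k.2 <= flow_load fl e.
Proof.
move=> flP kfl ek; rewrite /flow_load (big_rem k) //= ek lerDl big_seq_cond.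
by apply: sumr_ge0 => j /andP[/mem_rem /flP[]].
Qed.

Definition shorten_path p : seq (arc_t G) :=
  if p is e :: q then e :: shorten e q else [::].

Lemma shorten_pathP p : is_path p ->
  [/\ is_path (shorten_path p), uniq (shorten_path p),
      path_src (shorten_path p) = path_src p, path_dst (shorten_path p) = path_dst p
    & {subset shorten_path p <= p}].
Proof.
case: p => [[]//|e p [_ /= ep]]; rewrite !path_dst_cons.
case: (shortenP ep) => q eq_q uq qp; split=> //.
by move=> f; rewrite !inE => /predU1P[->|/qp ->]; rewrite ?eqxx ?orbT.
Qed.

Definition is_simple_flow fl :=
  forall k, k \in fl -> [/\ is_path k.1, uniq k.1 & 0 <= k.2].

Lemma simple_flow fl : is_flow fl -> exists fl', [/\ is_simple_flow fl',
  forall u v, flow_demand fl' u v = flow_demand fl u v &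
  forall e, flow_load fl' e <= flow_load fl e].
Proof.
move=> flP; exists [seq (shorten_path k.1, k.2) | k <- fl]; split.
- move=> _ /mapP[k /flP[kp k0] ->].
  by have [? ? _ _ _] := shorten_pathP kp.
- move=> u v; rewrite /flow_demand big_map big_seq_cond [RHS]big_seq_cond.
  apply: eq_bigl => k /=; case/boolP: (k \in fl) => //= /flP[kp _].
  by have [_ _ -> -> _] := shorten_pathP kp.
- move=> e; rewrite /flow_load big_map; apply: ler_sum_subpred => k /flP[kp k0] //.
  by have [_ _ _ _] := shorten_pathP kp; apply.
Qed.

Definition simple_paths : seq (seq (arc_t G)) :=
  undup [seq p <- flatten [seq map val (enum {: k.-tuple (arc_t G)})
                          | k <- iota 0 (narcs G).+1]
        | [&& p != [::], sorted arc_chain p & uniq p]].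

Lemma simple_pathsP p : reflect (is_path p /\ uniq p) (p \in simple_paths).
Proof.
rewrite mem_undup mem_filter; apply: (iffP idP).
  by case/andP=> /and3P[/eqP ? ? ?] _.
move=> [[/eqP p0 sp] up]; apply/andP; split; first by rewrite p0 up andbT.
apply/flatten_mapP; exists (size p).
  by rewrite mem_iota ltnS -(card_uniqP up) (leq_trans (max_card _)) ?card_ord.
by apply/mapP; exists (in_tuple p); rewrite ?mem_enum.
Qed.

Local Notation N := (size simple_paths).

Definition path_of (i : 'I_N) : seq (arc_t G) := tnth (in_tuple simple_paths) i.

Lemma path_ofP i : is_path (path_of i) /\ uniq (path_of i).
Proof. exact/simple_pathsP/mem_tnth. Qed.

Definition vector_flow (v : 'rV[R]_N) : seq (seq (arc_t G) * R) :=
  [seq (path_of i, v ord0 i) | i <- index_enum 'I_N].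

Definition flow_vector fl : 'rV[R]_N :=
  \row_i \sum_(k <- fl | k.1 == path_of i) k.2.

Lemma vector_flow_sum (Q : pred (seq (arc_t G))) v :
  \sum_(k <- vector_flow v | Q k.1) k.2 = \sum_(i | Q (path_of i)) v ord0 i.
Proof. by rewrite big_map. Qed.

Lemma flow_vector_sum (Q : pred (seq (arc_t G))) fl :
  (forall k, k \in fl -> k.1 \in simple_paths) ->
  \sum_(i | Q (path_of i)) flow_vector fl ord0 i = \sum_(k <- fl | Q k.1) k.2.
Proof.
move=> flS; under eq_bigr do rewrite mxE.
rewrite -(big_tnth _ _ simple_paths Q (fun p => \sum_(k <- fl | k.1 == p) k.2)).
rewrite (exchange_big_dep xpredT) //= [RHS]big_mkcond big_seq [RHS]big_seq.
apply: eq_bigr => k /flS kS; rewrite (eq_bigl (fun p => (p == k.1) && Q p)).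
  by rewrite big_mkcondr sum_uniq_pred1 ?undup_uniq.
by move=> p; rewrite andbC eq_sym.
Qed.

Lemma sum_flow_demand fl : is_flow fl ->
  \sum_u \sum_v flow_demand fl u v = \sum_(k <- fl) k.2.
Proof.
move=> flP; rewrite /flow_demand.
under eq_bigr do under eq_bigr do rewrite big_mkcond.
under eq_bigr do rewrite exchange_big.
rewrite exchange_big big_seq [RHS]big_seq; apply: eq_bigr => k /flP[kp _].
have [a [b [-> ->]]] := is_path_src_dst kp.
rewrite pair_bigA -big_mkcond /= (big_pred1 (a, b)) // => -[u v].
by rewrite /= xpair_eqE !(inj_eq (@Some_inj _)) !(eq_sym a) (eq_sym b).
Qed.

Local Open Scope classical_set_scope.

Variables (c : R) (A : 'M[R]_n).

(* The t such that the flow hosts t A, read off the total weight of the flow. *)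
Definition flow_rate (v : 'rV[R]_N) : R := (\sum_i v ord0 i) / \sum_u \sum_w A u w.

Definition feasible : set 'rV[R]_N :=
  [set v : 'rV[R]_N | forall i, `[0, c] (v ord0 i)] `&`
  [set v | forall u w, flow_demand (vector_flow v) u w = flow_rate v * A u w] `&`
  [set v | forall e, flow_load (vector_flow v) e <= c].

Lemma feasible_hosts v : feasible v -> hosts_cap G c (flow_rate v *: A).
Proof.
move=> [[box dem] load]; apply/hosts_capP; exists (vector_flow v); split=> //.
- move=> _ /mapP[i _ ->]; split; first exact: (path_ofP i).1.
  by have := box i; rewrite /= in_itv /= => /andP[].
- by move=> u w; rewrite mxE.
Qed.

Lemma vector_flow_simple fl : is_simple_flow fl ->
  let v := flow_vector fl in
  [/\ is_flow (vector_flow v),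
      forall u w, flow_demand (vector_flow v) u w = flow_demand fl u w &
      forall e, flow_load (vector_flow v) e = flow_load fl e].
Proof.
move=> flP v.
have vsum Q : \sum_(k <- vector_flow v | Q k.1) k.2 = \sum_(k <- fl | Q k.1) k.2.
  by rewrite vector_flow_sum flow_vector_sum // => k /flP[kp ku _]; apply/simple_pathsP.
split=> [_ /mapP[i _ ->]|u w|e]; last exact: vsum (fun p => e \in p).
  split; first exact: (path_ofP i).1.
  by rewrite mxE big_seq_cond; apply: sumr_ge0 => k /andP[/flP[]].
exact: vsum (fun p => (path_src p == Some u) && (path_dst p == Some w)).
Qed.

Lemma hosts_feasible t : \sum_u \sum_w A u w != 0 ->
  hosts_cap G c (t *: A) -> exists2 v, feasible v & flow_rate v = t.
Proof.
move=> A0 /hosts_capP[fl [flP dem load]].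
have [fl' [fl'P dem' load']] := simple_flow flP.
have [vflow vdem vload] := vector_flow_simple fl'P.
set v := flow_vector fl' in vflow vdem vload.
have demE u w : flow_demand (vector_flow v) u w = t * A u w.
  by rewrite vdem dem' dem mxE.
have loadE e : flow_load (vector_flow v) e <= c.
  by rewrite vload (le_trans (load' e)).
have rate : flow_rate v = t.
  rewrite /flow_rate -(vector_flow_sum predT) -sum_flow_demand //.
  under eq_bigr do under eq_bigr do rewrite demE.
  by under eq_bigr do rewrite -mulr_sumr; rewrite -mulr_sumr mulfK.
exists v => //; split; [split|exact: loadE]; last by move=> u w; rewrite rate.
move=> i; have vi : (path_of i, v ord0 i) \in vector_flow v.
  by rewrite map_f ?mem_index_enum.
have [e ei] : exists e, e \in path_of i.
  by case: (path_of i) (path_ofP i) => [[[]]|e p _] //; exists e; rewrite mem_head.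
rewrite /= in_itv /= (vflow _ vi).2 /=.
exact: le_trans (flow_weight_le_load vflow vi ei) (loadE e).
Qed.

Lemma vector_flow_sum_continuous (Q : pred (seq (arc_t G))) :
  continuous (fun v => \sum_(k <- vector_flow v | Q k.1) k.2).
Proof.
have -> : (fun v => \sum_(k <- vector_flow v | Q k.1) k.2) =
          (fun v => \sum_(i | Q (path_of i)) v ord0 i).
  by apply/funext => v; exact: vector_flow_sum.
exact: continuous_sum_coord.
Qed.

Lemma flow_rate_continuous : continuous flow_rate.
Proof.
move=> v; exact: continuousM (continuous_sum_coord (P := predT) (x := v))
                             (@cst_continuous _ _ _ v).
Qed.

Lemma feasible_compact : compact feasible.
Proof.
apply: compact_closedI; last first.
  apply: closed_forall => e; apply: closed_le_fun.
  exact: (vector_flow_sum_continuous (Q := fun p => e \in p)).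
apply: compact_closedI.
  exact: (@rV_compact R N (fun=> `[0, c]) (fun=> @segment_compact R 0 c)).
apply: closed_forall => u; apply: closed_forall => w; apply: closed_eq_fun.
  exact: (vector_flow_sum_continuous
           (Q := fun p => (path_src p == Some u) && (path_dst p == Some w))).
by move=> v; apply: continuousM; [exact: flow_rate_continuous | exact: cst_continuous].
Qed.

Lemma hosts_cap_max t0 : \sum_u \sum_w A u w != 0 -> hosts_cap G c (t0 *: A) ->
  exists2 theta, hosts_cap G c (theta *: A) /\
                 (forall t, hosts_cap G c (t *: A) -> t <= theta) & t0 <= theta.
Proof.
move=> A0 h0; have [v0 fv0 _] := hosts_feasible A0 h0.
have [v fv vmax] := EVT_max_rV (ex_intro _ v0 fv0) feasible_compact
  (continuous_subspaceT flow_rate_continuous).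
have tmax t : hosts_cap G c (t *: A) -> t <= flow_rate v.
  by case/(hosts_feasible A0) => w fw <-; apply: vmax; rewrite inE.
by exists (flow_rate v); [split=> //; exact/feasible_hosts/set_mem | exact: tmax].
Qed.

End Flows.

Section TwinGraph.
Variable n : nat.

(* The arc (a, x, b) goes from a to x; b = true marks the second of two parallel
   copies, which only exists for a != x. *)
Definition twin_ok (q : 'I_n * 'I_n * bool) := (q.1.1 != q.1.2) || ~~ q.2.

Definition twin_arc := {q | twin_ok q}.

Definition twin_ends (q : twin_arc) : 'I_n * 'I_n := ((val q).1.1, (val q).1.2).

Definition twin_graph : mgraph n := @MGraph n #|{: twin_arc}| (twin_ends \o enum_val).

Lemma twin_graph_arc q : arc twin_graph (enum_rank q) = twin_ends q.
Proof. by rewrite /twin_graph /= enum_rankK. Qed.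

Lemma card_twin_arcs (P : 'I_n -> 'I_n -> bool) :
  #|[set e : arc_t twin_graph | P (arc twin_graph e).1 (arc twin_graph e).2]| =
  (\sum_a \sum_x P a x * (1 + (a != x)))%N.
Proof.
have -> : #|[set e : arc_t twin_graph | P (arc twin_graph e).1 (arc twin_graph e).2]| =
          #|[set q : twin_arc | P (twin_ends q).1 (twin_ends q).2]|.
  rewrite -(on_card_preimset (onW_bij _ (@enum_val_bij twin_arc))).
  by apply: eq_card => e; rewrite !inE.
rewrite -(card_imset _ val_inj).
have -> : val @: [set q : twin_arc | P (twin_ends q).1 (twin_ends q).2] =
          [set q | twin_ok q && P q.1.1 q.1.2].
  apply/setP => q; rewrite inE; apply/imsetP/andP => [[r + ->]|[qok Pq]].
    by rewrite inE => Pr; split=> //; exact: valP.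
  by exists (exist _ q qok); rewrite ?inE.
have -> : #|[set q | twin_ok q && P q.1.1 q.1.2]| =
          (\sum_a \sum_x \sum_(b | twin_ok (a, x, b) && P a x) 1)%N.
  by rewrite pair_bigA pair_big_dep -sum1dep_card; apply: eq_bigl => -[[a x] b].
apply: eq_bigr => a _; apply: eq_bigr => x _.
by rewrite big_mkcond big_bool /twin_ok /=; case: (P a x); case: (a != x).
Qed.

Lemma sum_twin_degree (v : 'I_n) : (\sum_x (1 + (v != x)) = 2 * n - 1)%N.
Proof.
rewrite big_split /=; have -> : (\sum_x (v != x) = #|predC1 v|)%N.
  by rewrite -sum1_card [RHS]big_mkcond; apply: eq_bigr => x _; rewrite inE eq_sym.
rewrite sum_nat_const card_ord cardC1 card_ord muln1.
by case: n v => // m _; rewrite mul2n -addnn addSn subn1 /= addnS.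
Qed.

Lemma twin_graph_regular : dregular twin_graph (2 * n - 1).
Proof.
move=> v; rewrite (card_twin_arcs (fun a _ => a == v)) (card_twin_arcs (fun _ x => x == v)).
rewrite [X in _ /\ X = _]exchange_big -(sum_twin_degree v).
have drop_others (F : 'I_n -> 'I_n -> nat) :
    (\sum_a \sum_x (a == v) * F a x = \sum_x F v x)%N.
  rewrite (bigD1 v) //= [X in (_ + X)%N]big1 => [|a /negbTE av]; last first.
    by apply: big1 => x _; rewrite av.
  by rewrite addn0; apply: eq_bigr => x _; rewrite eqxx mul1n.
by split; rewrite drop_others //; apply: eq_bigr => x _; rewrite eq_sym.
Qed.

Definition phase1_arc (a x : 'I_n) : twin_arc := exist _ (a, x, false) (orbT _).
(* Junk for a = x, where the route never uses it. *)
Definition phase2_arc (a x : 'I_n) : twin_arc := insubd (phase1_arc a x) (a, x, true).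

Lemma twin_ends_phase2 a x : twin_ends (phase2_arc a x) = (a, x).
Proof. by rewrite /twin_ends val_insubd; case: ifP. Qed.

(* An empty hop is skipped, except that u = w = v uses the loop. *)
Definition twin_route (u v w : 'I_n) : seq twin_arc :=
  if w == v then [:: phase1_arc u w]
  else if u == w then [:: phase2_arc w v] else [:: phase1_arc u w; phase2_arc w v].

Lemma mem_twin_route u v w q : q \in twin_route u v w ->
  twin_ends q = if (val q).2 then (w, v) else (u, w).
Proof.
have phase2 : w != v -> val (phase2_arc w v) = (w, v, true).
  by move=> wv; rewrite insubdK //; apply/orP; left.
rewrite /twin_route; case: eqP => [_|/eqP wv]; first by rewrite inE => /eqP ->.
case: eqP => _; rewrite !inE; first by move=> /eqP ->; rewrite /twin_ends phase2.
by case/orP => /eqP ->; rewrite /twin_ends ?phase2.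
Qed.

Definition twin_path (u v w : 'I_n) : seq (arc_t twin_graph) :=
  map enum_rank (twin_route u v w).

Lemma twin_path_is_path u v w : is_path (twin_path u v w).
Proof.
split; first by rewrite /twin_path /twin_route; case: ifP => //; case: ifP.
rewrite /twin_path /twin_route; case: ifP => // _; case: ifP => // _.
by apply/andP; split; rewrite // !twin_graph_arc twin_ends_phase2.
Qed.

Lemma twin_path_src u v w : path_src (twin_path u v w) = Some u.
Proof.
rewrite /twin_path /twin_route; case: ifP => _; last case: ifP => [/eqP <-|_];
  by rewrite map_cons path_src_cons twin_graph_arc ?twin_ends_phase2.
Qed.

Lemma twin_path_dst u v w : path_dst (twin_path u v w) = Some v.
Proof.
rewrite /twin_path /twin_route; case: ifP => [/eqP <-|_]; last case: ifP => _;
  by rewrite map_cons path_dst_cons [last _ _]/= twin_graph_arc ?twin_ends_phase2.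
Qed.

End TwinGraph.

Section TwinFlow.
Variables (R : realType) (n : nat) (M : 'M[R]_n).

Local Notation K := ((2 * n - 1)%N%:R : R).

Definition twin_flow : seq (seq (arc_t (twin_graph n)) * R) :=
  [seq (twin_path p.1.1 p.1.2 p.2, M p.1.1 p.1.2 / K)
  | p <- index_enum ('I_n * 'I_n * 'I_n)%type].

Lemma twin_flow_demand u v : flow_demand twin_flow u v = n%:R / K * M u v.
Proof.
rewrite /flow_demand big_map (eq_bigl (fun p => (p.1 == (u, v)) && xpredT p.2)) => [|p].
  rewrite (sum_pair_pin1 (u, v) xpredT (fun uv _ => M uv.1 uv.2 / K)) sumr_const card_ord.
  by rewrite -[LHS]mulr_natl /= mulrA mulrAC.
by case: p => [[a b] w]; rewrite /= twin_path_src twin_path_dst andbT xpair_eqE.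
Qed.

Lemma twin_flow_load e : doubly_stochastic M -> flow_load twin_flow e <= K^-1.
Proof.
case=> M0 [Mrow Mcol]; rewrite -(enum_valK e); move: (enum_val e) => q.
pose owner (p : 'I_n * 'I_n * 'I_n) :=
  twin_ends q == if (val q).2 then (p.2, p.1.2) else (p.1.1, p.2).
apply: (@le_trans _ _ (\sum_(p | owner p) M p.1.1 p.1.2 / K)).
  rewrite /flow_load big_map; apply: ler_sum_subpred => p _.
    by rewrite divr_ge0.
  rewrite /twin_path mem_map; last exact: enum_rank_inj.
  by move=> qr; rewrite /owner (mem_twin_route qr).
rewrite /owner; case: (twin_ends q) (val q).2 => a x [].
- rewrite (eq_bigl (fun p => xpredT p.1.1 && (p.1.2 == x) && (p.2 == a))) => [|[[u v] w]].
    rewrite (sum_pair_pin2 (fun uv => xpredT uv.1 && (uv.2 == x)) a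
                           (fun uv _ => M uv.1 uv.2 / K)).
    by rewrite (sum_pair_pin2 xpredT x (fun u v => M u v / K)) -mulr_suml Mcol mul1r.
  by rewrite /= xpair_eqE (eq_sym a) (eq_sym x) andbC.
- rewrite (eq_bigl (fun p => (p.1.1 == a) && xpredT p.1.2 && (p.2 == x))) => [|[[u v] w]].
    rewrite (sum_pair_pin2 (fun uv => (uv.1 == a) && xpredT uv.2) x
                           (fun uv _ => M uv.1 uv.2 / K)).
    by rewrite (sum_pair_pin1 a xpredT (fun u v => M u v / K)) -mulr_suml Mrow mul1r.
  by rewrite /= xpair_eqE andbT eq_sym (eq_sym x).
Qed.

Lemma twin_graph_hosts : doubly_stochastic M ->
  hosts (twin_graph n) ((n%:R / K) *: M).
Proof.
move=> DS; apply/hosts_capP; exists twin_flow; split.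
- by move=> _ /mapP[p _ ->]; split; [exact: twin_path_is_path | rewrite divr_ge0 ?DS.1].
- by move=> u v; rewrite twin_flow_demand mxE.
- by move=> e; exact: twin_flow_load.
Qed.

End TwinFlow.

Theorem mainTheorem5 (R : realType) (n : nat) (M : 'M[R]_n) (kappa : R) :
  (1 <= n)%N ->
  doubly_stochastic M ->
  kappa <= n%:R / (2 * n - 1)%N%:R ->
  exists G : mgraph n,
    dregular G (2 * n - 1) /\
    exists theta : R, is_throughput G M theta /\ kappa <= theta.
Proof.
move=> n_gt0 DS kappa_le; exists (twin_graph n); split; first exact: twin_graph_regular.
have M_total : \sum_u \sum_w M u w != 0.
  have [_ [Mrow _]] := DS; under eq_bigr do rewrite Mrow.
  by rewrite sumr_const card_ord pnatr_eq0 -lt0n.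
have [theta theta_max ge_theta] := hosts_cap_max M_total (twin_graph_hosts DS).
by exists theta; split; last exact: le_trans kappa_le ge_theta.
Qed.
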